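(* Let $U$ be a finite nonempty set, $R$ an equivalence relation on $U$, and $M(R)$ the support matroid induced by $R$. Then the family of closed sets of $M(R)$ is $$\mathbf{L}(R)=\Big\{X\subseteq U : \bigcup_{x\in X} RN(x)=X\Big\}.$$
   Context: For $x\in U$, $RN(x)=\{y\in U\mid xRy\}$; $R^{*}(X)=\{x\in U\mid RN(x)\cap X\neq\emptyset\}$. Let $\mathbf{S}(R)=\{X\subseteq U\mid R^{*}(X)=U\}$. The support matroid $M(R)=(U,\mathbf{I}(R))$ is the matroid on $U$ whose independent sets $\mathbf{I}(R)$ are the subsets of inclusion-minimal members of $\mathbf{S}(R)$. For a matroid $(U,\mathbf{I})$, the rank is $r(X)=\max\{|I|\mid I\subseteq X, I\in\mathbf{I}\}$, the closure is $cl(X)=\{e\in U\mid r(X)=r(X\cup\{e\})\}$, and $X$ is closed if $cl(X)=X$. *)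

From mathcomp Require Import all_boot.
Set Implicit Arguments. Unset Strict Implicit. Unset Printing Implicit Defensive.

Section SupportMatroid.
Variables (U : finType) (R : rel U).

Definition RN (x : U) : {set U} := [set y | R x y].

Definition Rstar (X : {set U}) : {set U} := [set x | RN x :&: X != set0].

Definition SR (X : {set U}) : bool := Rstar X == setT.

Definition indepR (I : {set U}) : bool :=
  [exists X : {set U}, minset SR X && (I \subset X)].

Definition rankR (X : {set U}) : nat :=
  \max_(I : {set U} | (I \subset X) && indepR I) #|I|.

Definition clR (X : {set U}) : {set U} :=
  [set e | rankR X == rankR (e |: X)].

Definition closedR (X : {set U}) : bool := clR X == X.

End SupportMatroid.

From mathcomp Require Import all_boot.
Set Implicit Arguments. Unset Strict Implicit. Unset Printing Implicit Defensive.

(* For an equivalence [R], the minimal members of [S(R)] are the transversals of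
   the classes, so the independent sets are the partial transversals (sets
   meeting each class at most once). Hence the rank of [X] is the number of
   classes meeting [X], and [e] lies in [cl(X)] exactly when the class of [e]
   already meets [X]: [cl(X)] is the union of the classes meeting [X], and [X]
   is closed iff it is a union of classes. *)

Section SupportMatroidOfEquivalence.
Variables (U : finType) (R : rel U).
Hypotheses (Rrefl : reflexive R) (Rsym : symmetric R) (Rtrans : transitive R).

Lemma RN_rel x y : R x y -> RN R x = RN R y.
Proof.
move=> Rxy; apply/setP => z; rewrite !inE.
apply/idP/idP => [Rxz | Ryz]; last exact: Rtrans Ryz.
by rewrite Rsym in Rxy; exact: Rtrans Rxy Rxz.
Qed.

Lemma eqRN x y : (RN R x == RN R y) = R x y.
Proof.
apply/eqP/idP => [E | /RN_rel //].
have : y \in RN R y by rewrite inE.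
by rewrite -E inE.
Qed.

Lemma SRP (X : {set U}) : reflect (forall z, exists2 w, w \in X & R z w) (SR R X).
Proof.
apply: (iffP eqP) => [E z | H].
- have : z \in Rstar R X by rewrite E inE.
  by rewrite inE => /set0Pn [w]; rewrite !inE => /andP [Rzw wX]; exists w.
- apply/setP => z; rewrite !inE; apply/set0Pn.
  by have [w wX Rzw] := H z; exists w; rewrite !inE Rzw wX.
Qed.

Definition ptransversal (I : {set U}) : Prop := {in I &, forall x y, R x y -> x = y}.

Lemma card_RN_ptransversal (I : {set U}) : ptransversal I -> #|RN R @: I| = #|I|.
Proof. by move=> PI; apply: card_in_imset => x y xI yI /eqP; rewrite eqRN; apply: PI. Qed.

(* A representative of the class of [x] chosen inside [A]; junk value [x] when
   the class does not meet [A]. *)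
Definition crep (A : {set U}) (x : U) : U := odflt x [pick y in A | R x y].

Lemma crepP (A : {set U}) x : x \in A -> (crep A x \in A) && R x (crep A x).
Proof. by move=> xA; rewrite /crep; case: pickP => [// | /(_ x)]; rewrite xA Rrefl. Qed.

Lemma crep_rel (A : {set U}) x y : x \in A -> R x y -> crep A x = crep A y.
Proof.
move=> xA Rxy; rewrite /crep (eq_pick (Q := [pred z | (z \in A) && R y z])).
  by case: pickP => [// | /(_ x)] /=; rewrite xA Rsym Rxy.
by move=> z /=; have /setP/(_ z) := RN_rel Rxy; rewrite !inE => ->.
Qed.

Lemma crep_transversal (A : {set U}) :
  [/\ crep A @: A \subset A, ptransversal (crep A @: A) & RN R @: (crep A @: A) = RN R @: A].
Proof.
split.
- by apply/subsetP => _ /imsetP [x xA ->]; case/andP: (crepP xA).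
- move=> _ _ /imsetP [x xA ->] /imsetP [y yA ->] Rxy'.
  case/andP: (crepP xA) => _ Rx; case/andP: (crepP yA) => _ Ry.
  apply: crep_rel => //; apply: Rtrans Rx _; apply: Rtrans Rxy' _; by rewrite Rsym.
- rewrite -imset_comp; apply: eq_in_imset => x xA /=.
  by apply/esym/RN_rel; case/andP: (crepP xA).
Qed.

Lemma ptransversal_minset (X : {set U}) : SR R X -> ptransversal X -> minset (SR R) X.
Proof.
move=> SX PX; apply/minsetP; split => // B /SRP SB sBX.
apply/eqP; rewrite eqEsubset sBX /=; apply/subsetP => y yX.
have [w wB Ryw] := SB y.
by rewrite (PX y w yX (subsetP sBX _ wB) Ryw).
Qed.

(* Removing [y] keeps [X] in [S(R)] whenever another element [x] of its class stays. *)
Lemma minset_ptransversal (X : {set U}) : minset (SR R) X -> ptransversal X.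
Proof.
move=> /minsetP [/SRP SX minX] x y xX yX Rxy; apply/eqP/contraT => nxy.
suff : y \in X :\ y by rewrite !inE eqxx.
rewrite (minX (X :\ y)) ?subsetDl //; apply/SRP => z.
have [w wX Rzw] := SX z; case: (eqVneq w y) => [Ewy | nwy].
- exists x; first by rewrite !inE nxy xX.
  by apply: Rtrans Rzw _; rewrite Ewy Rsym.
- by exists w; rewrite // !inE nwy.
Qed.

Lemma indepR_ptransversal (I : {set U}) : indepR R I <-> ptransversal I.
Proof.
rewrite /indepR; split.
  case/existsP => X /andP [/minset_ptransversal PX /subsetP sIX].
  by move=> x y xI yI; apply: PX; apply: sIX.
(* Extend [I] by one representative of each class that [I] misses. *)
move=> PI; pose A := ~: Rstar R I.
have [sTA PT _] := crep_transversal A.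
apply/existsP; exists (I :|: crep A @: A); rewrite subsetUl andbT.
apply: ptransversal_minset.
  apply/SRP => z; case: (boolP (z \in A)) => [zA | ].
    case/andP: (crepP zA) => _ Rzc.
    by exists (crep A z) => //; rewrite inE imset_f ?orbT.
  rewrite inE negbK inE => /set0Pn [w]; rewrite !inE => /andP [Rzw wI].
  by exists w; rewrite // inE wI.
have cross x y : x \in I -> y \in crep A @: A -> R x y -> False.
  move=> xI /(subsetP sTA); rewrite !inE negbK => /eqP/setP/(_ x).
  by rewrite !inE xI andbT Rsym => ->.
move=> x y; rewrite !inE => /orP [xI | xT] /orP [yI | yT] Rxy.
- exact: PI.
- by case: (cross x y).
- by case: (cross y x); rewrite // Rsym.
- exact: PT.
Qed.

Lemma rankR_classes (X : {set U}) : rankR R X = #|RN R @: X|.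
Proof.
apply/eqP; rewrite eqn_leq; apply/andP; split.
  apply/bigmax_leqP => I /andP [sIX /indepR_ptransversal PI].
  by rewrite -card_RN_ptransversal // subset_leq_card // imsetS.
have [sTX PT <-] := crep_transversal X.
rewrite card_RN_ptransversal //.
by apply: (leq_bigmax_cond (F := fun I : {set U} => #|I|)); rewrite sTX; apply/indepR_ptransversal.
Qed.

Lemma clR_classes (X : {set U}) : clR R X = \bigcup_(x in X) RN R x.
Proof.
apply/setP => e; rewrite inE !rankR_classes imsetU1 cardsU1 -{1}[#|_|]add0n eqn_add2r eq_sym.
rewrite eqb0 negbK; apply/imsetP/bigcupP => [[x xX /eqP] | [x xX]].
- by rewrite eqRN => Rex; exists x; rewrite // inE Rsym.
- by rewrite inE => Rxe; exists x => //; apply/RN_rel; rewrite Rsym.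
Qed.

End SupportMatroidOfEquivalence.

Theorem proposition9 (U : finType) (R : rel U)
  (U_nonempty : 0 < #|U|)
  (Rrefl : reflexive R) (Rsym : symmetric R) (Rtrans : transitive R) :
  forall X : {set U},
    closedR R X <-> \bigcup_(x in X) RN R x = X.
Proof. by move=> X; rewrite /closedR clR_classes //; split => [/eqP | ->]. Qed.
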